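(* Let $a>0$ and let $\theta_0,\theta_1,\theta_2\in\mathbb{R}$ be distinct. In the $(t,x)$-plane consider the points $P_i=\left(\theta_i,\tfrac12 a\theta_i^2\right)$, $i=0,1,2$, on the parabola $x=\tfrac12 at^2$. For $c>0$ equip the plane with the Euclidean inner product $u\cdot v=c^2u_tv_t+u_xv_x$ associated to the metric $ds^2=dx^2+c^2dt^2$, and let $\theta(c)\in[0,\pi/2]$ be the (acute) angle between the chords $P_0P_1$ and $P_0P_2$, defined by $\cos^2(\theta(c))=\frac{(u\cdot v)^2}{(u\cdot u)(v\cdot v)}$ with $u=P_1-P_0$, $v=P_2-P_0$. Then $$\theta(c)^2\sim\frac{a^2}{4c^2}(\theta_1-\theta_2)^2\quad\text{as } c\to\infty,$$ an asymptotic which does not depend on $\theta_0$.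
   Context: The parabola $x=\tfrac12at^2$ is the $c\to\infty$ limit of the ellipses $\left(x-\frac{c^2}{a}\right)^2+c^2t^2=\frac{c^4}{a^2}$, parametrised as $x=\frac{c^2}{a}(1-\cos(a\theta/c))$, $t=\frac{c}{a}\sin(a\theta/c)$; each such ellipse is a metric circle for $ds^2=dx^2+c^2dt^2$. *)

From Stdlib Require Import Reals.
From Coquelicot Require Import Coquelicot.
Open Scope R_scope.

Definition dotc (c ut ux vt vx : R) : R := c ^ 2 * ut * vt + ux * vx.

Definition parab_x (a th : R) : R := / 2 * a * th ^ 2.

Definition chord_angle (a th0 th1 th2 c : R) : R :=
  let ut := th1 - th0 in
  let ux := parab_x a th1 - parab_x a th0 in
  let vt := th2 - th0 in
  let vx := parab_x a th2 - parab_x a th0 in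
  acos (sqrt ((dotc c ut ux vt vx) ^ 2 /
              (dotc c ut ux ut ux * dotc c vt vx vt vx))).

From Stdlib Require Import Reals Lra.
From Coquelicot Require Import Coquelicot.
Open Scope R_scope.

(** The chords P0P1 and P0P2 have directions (1, p) and (1, q), where p and q
    are their slopes a (θ0 + θ1) / 2 and a (θ0 + θ2) / 2.  Lagrange's identity
    |u|²|v|² = (u·v)² + c² (u × v)² gives tan θ(c) = c |p - q| / (c² + p q)
    as soon as c² + p q > 0, so c θ(c) tends to |p - q| = a |θ1 - θ2| / 2;
    θ0 only enters through the bounded term p q. *)

Definition chord_slope (a th0 th1 : R) : R := a * (th0 + th1) / 2.

Lemma parab_x_sub (a th0 th1 : R) :
  parab_x a th1 - parab_x a th0 = chord_slope a th0 th1 * (th1 - th0).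
Proof. unfold parab_x, chord_slope; field. Qed.

Lemma dotc_Lagrange (c ut ux vt vx : R) :
  dotc c ut ux ut ux * dotc c vt vx vt vx =
  dotc c ut ux vt vx ^ 2 + (c * (ut * vx - ux * vt)) ^ 2.
Proof. unfold dotc; ring. Qed.

Lemma acos_sqrt_sqr_div (x y : R) :
  x <> 0 -> acos (sqrt (x ^ 2 / (x ^ 2 + y ^ 2))) = atan (Rabs y / Rabs x).
Proof.
  intros hx.
  assert (hx' : 0 < Rabs x) by now apply Rabs_pos_lt.
  assert (hD : 0 < x ^ 2 + y ^ 2) by nra.
  assert (hr : 0 < sqrt (x ^ 2 + y ^ 2)) by now apply sqrt_lt_R0.
  assert (sqrt_sqr_div : forall z, sqrt (z ^ 2 / (x ^ 2 + y ^ 2)) = Rabs z / sqrt (x ^ 2 + y ^ 2)).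
  { intro z. now rewrite sqrt_div_alt, <- pow2_abs, sqrt_pow2 by (auto using Rabs_pos). }
  rewrite sqrt_sqr_div, acos_atan by (apply Rdiv_lt_0_compat; lra).
  replace (1 - (Rabs x / sqrt (x ^ 2 + y ^ 2))²) with (y ^ 2 / (x ^ 2 + y ^ 2)).
  - rewrite sqrt_sqr_div. f_equal. field. lra.
  - rewrite Rsqr_div', <- Rsqr_abs, Rsqr_sqrt, Rsqr_pow2 by lra. field. lra.
Qed.

Lemma acos_sqrt_cos2_dotc (c ut ux vt vx : R) :
  dotc c ut ux vt vx <> 0 ->
  acos (sqrt (dotc c ut ux vt vx ^ 2 / (dotc c ut ux ut ux * dotc c vt vx vt vx))) =
  atan (Rabs (c * (ut * vx - ux * vt)) / Rabs (dotc c ut ux vt vx)).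
Proof. intros h. now rewrite dotc_Lagrange, acos_sqrt_sqr_div. Qed.

Lemma chord_angle_atan (a th0 th1 th2 c : R) :
  th1 <> th0 -> th2 <> th0 ->
  c ^ 2 + chord_slope a th0 th1 * chord_slope a th0 th2 <> 0 ->
  chord_angle a th0 th1 th2 c =
  atan (Rabs (c * (chord_slope a th0 th1 - chord_slope a th0 th2)) /
        Rabs (c ^ 2 + chord_slope a th0 th1 * chord_slope a th0 th2)).
Proof.
  intros h1 h2 hpq.
  set (p := chord_slope a th0 th1) in *; set (q := chord_slope a th0 th2) in *.
  set (d := (th1 - th0) * (th2 - th0)).
  assert (hd : d <> 0) by (apply Rmult_integral_contrapositive; split; lra).
  assert (hdot : dotc c (th1 - th0) (p * (th1 - th0)) (th2 - th0) (q * (th2 - th0)) =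
                 d * (c ^ 2 + p * q)) by (unfold dotc, d; ring).
  unfold chord_angle. rewrite !parab_x_sub. fold p q.
  rewrite acos_sqrt_cos2_dotc, hdot.
  - replace (c * ((th1 - th0) * (q * (th2 - th0)) - p * (th1 - th0) * (th2 - th0)))
      with (- d * (c * (p - q))) by (unfold d; ring).
    rewrite !Rabs_mult, Rabs_Ropp. f_equal. field.
    split; apply Rabs_no_R0; auto.
  - rewrite hdot. now apply Rmult_integral_contrapositive.
Qed.

Lemma is_lim_atan_div : is_lim (fun y => atan y / y) 0 1.
Proof.
  apply is_lim_spec; intro eps.
  destruct (derivable_pt_lim_atan 0 eps (cond_pos eps)) as [d hd].
  exists d; intros y hy hy0.
  specialize (hd y hy0).
  rewrite Rplus_0_l, atan_0, Rminus_0_r in hd.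
  replace 1 with (/ (1 + 0 ^ 2)) by (simpl; field).
  apply hd. rewrite <- (Rminus_0_r y). exact hy.
Qed.

Lemma is_lim_atan_mul_div (g : R -> R) (l : R) :
  is_lim g 0 l -> l <> 0 -> is_lim (fun y => atan (y * g y) / y) 0 l.
Proof.
  intros hg hl.
  assert (near_ne0 : Rbar_locally' 0 (fun y => y * g y <> 0)).
  { assert (hl' : 0 < Rabs l) by now apply Rabs_pos_lt.
    apply (filter_imp (fun y => y <> 0 /\ Rabs (g y - l) < Rabs l)).
    - intros y [hy hgy]. apply Rmult_integral_contrapositive; split; auto.
      intros e; rewrite e, Rminus_0_l, Rabs_Ropp in hgy; lra.
    - apply filter_and.
      + now exists (mkposreal 1 Rlt_0_1).
      + exact (proj2 (is_lim_spec g 0 l) hg (mkposreal _ hl')). }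
  assert (lim_mul : is_lim (fun y => y * g y) 0 0).
  { pose proof (is_lim_mult (fun y => y) g 0 0 l (is_lim_id 0) hg I) as h.
    simpl in h. now rewrite Rmult_0_l in h. }
  apply is_lim_ext_loc with (fun y => atan (y * g y) / (y * g y) * g y).
  - apply (filter_imp (fun y => y <> 0 /\ y * g y <> 0)).
    + intros y [hy hyg]. field. split; auto. intros e; apply hyg; rewrite e; ring.
    + apply filter_and; [now exists (mkposreal 1 Rlt_0_1) | exact near_ne0].
  - replace (Finite l) with (Rbar_mult 1 l) by (simpl; f_equal; ring).
    apply is_lim_mult; [| exact hg | easy].
    apply (is_lim_comp (fun z => atan z / z) (fun y => y * g y) 0 1 0);
      [exact is_lim_atan_div | exact lim_mul |].
    eapply filter_imp; [| exact near_ne0].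
    intros y h e; apply h; now injection e.
Qed.

Lemma is_lim_comp_Rinv_p_infty (f : R -> R) (l : Rbar) :
  is_lim f 0 l -> is_lim (fun x => f (/ x)) p_infty l.
Proof.
  intros hf. apply (is_lim_comp f Rinv p_infty l 0 hf).
  - apply (is_lim_inv (fun x => x) p_infty p_infty); [apply is_lim_id | discriminate].
  - exists 0; intros x hx e. apply (Rinv_neq_0_compat x); [lra | now injection e].
Qed.

Section ChordAngleAsymptotics.

Variables a th0 th1 th2 : R.
Hypotheses (h1 : th1 <> th0) (h2 : th2 <> th0)
  (hslope : chord_slope a th0 th1 <> chord_slope a th0 th2).

Local Notation p := (chord_slope a th0 th1).
Local Notation q := (chord_slope a th0 th2).

Lemma is_lim_mul_chord_angle :
  is_lim (fun c => c * chord_angle a th0 th1 th2 c) p_infty (Rabs (p - q)).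
Proof.
  set (g := fun y => Rabs (p - q) / (1 + p * q * y ^ 2)).
  apply is_lim_ext_loc with (fun c => atan (/ c * g (/ c)) / / c).
  - exists (1 + Rabs (p * q)); intros c hc.
    pose proof (Rabs_maj2 (p * q)); pose proof (Rabs_pos (p * q)).
    assert (hc0 : 0 < c) by lra.
    assert (hD : 0 < c ^ 2 + p * q) by nra.
    rewrite chord_angle_atan, Rabs_mult, (Rabs_pos_eq c), (Rabs_pos_eq (c ^ 2 + p * q)) by lra.
    unfold g.
    replace (/ c * (Rabs (p - q) / (1 + p * q * (/ c) ^ 2)))
      with (c * Rabs (p - q) / (c ^ 2 + p * q)) by (field; lra).
    field; lra.
  - assert (hg0 : g 0 = Rabs (p - q)) by (unfold g; simpl; field).
    rewrite <- hg0.
    apply (is_lim_comp_Rinv_p_infty (fun y => atan (y * g y) / y)), is_lim_atan_mul_div.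
    + apply is_lim_continuity. unfold g; reg. simpl; lra.
    + rewrite hg0. apply Rabs_no_R0. lra.
Qed.

End ChordAngleAsymptotics.

Theorem mainTheorem5 (a th0 th1 th2 : R) :
  0 < a -> th0 <> th1 -> th0 <> th2 -> th1 <> th2 ->
  is_lim (fun c => (chord_angle a th0 th1 th2 c) ^ 2 /
                   (a ^ 2 / (4 * c ^ 2) * (th1 - th2) ^ 2))
         p_infty 1.
Proof.
  intros ha h01 h02 h12.
  set (k := a * (th1 - th2) / 2).
  assert (hslope : chord_slope a th0 th1 - chord_slope a th0 th2 = k)
    by (unfold chord_slope, k; field).
  assert (hk : k <> 0) by (unfold k; intro e; apply h12; nra).
  assert (lim_mul : is_lim (fun c => c * chord_angle a th0 th1 th2 c) p_infty (Rabs k)).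
  { rewrite <- hslope. apply is_lim_mul_chord_angle; try congruence.
    intro e; apply hk; rewrite <- hslope, e; ring. }
  set (sq := fun z => z ^ 2 / k ^ 2).
  apply is_lim_ext_loc with (fun c => sq (c * chord_angle a th0 th1 th2 c)).
  - exists 0; intros c hc. unfold sq, k. field. lra.
  - replace (Finite 1) with (Finite (sq (Rabs k)))
      by (unfold sq; rewrite pow2_abs; f_equal; field; exact hk).
    apply is_lim_comp_continuous; [exact lim_mul |].
    apply continuity_pt_filterlim; unfold sq; reg.
Qed.
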